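(* Let $(K,\delta)$ be a differential field of characteristic zero and $x\in K$ with $\delta(x)=1$, and let $C_K=\{c\in K:\delta(c)=0\}$ be its constant field. Then the set $\mathrm{Stab}(\delta,K)$ of stable elements is a $C_K[x]$-submodule of $K$ (under multiplication in $K$), and $\delta(\mathrm{Stab}(\delta,K))\subseteq\mathrm{Stab}(\delta,K)$.
   Context: A differential field $(K,\delta)$ is a field with an additive map $\delta$ satisfying $\delta(fg)=f\delta(g)+g\delta(f)$. $\mathrm{Stab}(\delta,K)$ is the set of $a\in K$ for which there is a sequence $(a_i)_{i\ge0}$ in $K$ with $a_0=a$ and $\delta(a_{i+1})=a_i$ for all $i\in\mathbb{N}$. *)

From mathcomp Require Import all_boot all_order all_algebra.
Set Implicit Arguments. Unset Strict Implicit. Unset Printing Implicit Defensive.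
Import GRing.Theory.
Local Open Scope ring_scope.

Definition is_derivation (K : fieldType) (delta : K -> K) : Prop :=
  (forall f g : K, delta (f + g) = delta f + delta g) /\
  (forall f g : K, delta (f * g) = f * delta g + g * delta f).

Definition constants (K : fieldType) (delta : K -> K) : K -> Prop :=
  fun c => delta c = 0.

Definition Stab (K : fieldType) (delta : K -> K) : K -> Prop :=
  fun a => exists s : nat -> K, s 0%N = a /\ forall i : nat, delta (s i.+1) = s i.

Definition in_CKx (K : fieldType) (delta : K -> K) (x : K) : K -> Prop :=
  fun r => exists p : {poly K}, (forall i : nat, constants delta p`_i) /\ r = p.[x].

From mathcomp Require Import all_boot all_order all_algebra.
From mathcomp Require Import ring.
Import GRing.Theory.
Local Open Scope ring_scope.

(* Stable elements are those with a chain of iterated antiderivatives, and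
   such chains can be added termwise, scaled termwise by constants, and
   shifted by one to give a chain for delta a.  For x * a with chain (s_i),
   integration by parts suggests the chain t_i = x s_i - i s_(i+1):
   delta t_(i+1) = s_(i+1) + x s_i - (i+1) s_(i+1) = t_i.  Closure under
   C_K[x] then follows by Horner induction. *)

Section StableElements.

Variables (K : fieldType) (delta : K -> K).
Hypothesis deltaD : forall f g : K, delta (f + g) = delta f + delta g.
Hypothesis deltaM : forall f g : K, delta (f * g) = f * delta g + g * delta f.

Lemma delta0 : delta 0 = 0.
Proof. by apply: (addIr (delta 0)); rewrite -deltaD !add0r. Qed.

Lemma deltaN (y : K) : delta (- y) = - delta y.
Proof. by apply: (addrI (delta y)); rewrite -deltaD !subrr delta0. Qed.

Lemma deltaMn (y : K) (n : nat) : delta (y *+ n) = delta y *+ n.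
Proof. by elim: n => [|n IHn]; rewrite ?mulr0n ?delta0 // !mulrS deltaD IHn. Qed.

Lemma Stab0 : Stab delta 0.
Proof. by exists (fun=> 0); split=> // i; rewrite delta0. Qed.

Lemma StabD (a b : K) : Stab delta a -> Stab delta b -> Stab delta (a + b).
Proof.
move=> [s [s0 ds]] [t [t0 dt]]; exists (fun i => s i + t i).
by split=> [|i]; rewrite ?s0 ?t0 // deltaD ds dt.
Qed.

Lemma Stab_mul_constant (c a : K) :
  constants delta c -> Stab delta a -> Stab delta (c * a).
Proof.
move=> dc [s [s0 ds]]; exists (fun i => c * s i).
by split=> [|i]; rewrite ?s0 // deltaM dc mulr0 addr0 ds.
Qed.

Lemma Stab_mulX (x a : K) : delta x = 1 -> Stab delta a -> Stab delta (x * a).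
Proof.
move=> dx [s [s0 ds]]; exists (fun i => x * s i - s i.+1 *+ i).
split=> [|i]; first by rewrite s0 mulr0n subr0.
rewrite deltaD deltaN deltaMn deltaM dx mulr1 !ds mulrSr.
ring.
Qed.

Lemma Stab_mul_CKx (x r a : K) :
  delta x = 1 -> in_CKx delta x r -> Stab delta a -> Stab delta (r * a).
Proof.
move=> dx [p [p_const ->]] Sa; elim/poly_ind: p p_const => [|p c IHp] p_const.
  by rewrite horner0 mul0r; apply: Stab0.
have coef_const i : constants delta (p * 'X + c%:P)`_i := p_const i.
rewrite hornerMXaddC mulrDl mulrAC mulrC; apply: StabD.
  apply: Stab_mulX => //; apply: IHp => i.
  by move: (coef_const i.+1); rewrite coefD coefMX coefC addr0.
apply: Stab_mul_constant => //.
by move: (coef_const 0%N); rewrite coefD coefMX coefC add0r.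
Qed.

End StableElements.

Lemma Stab_delta (K : fieldType) (delta : K -> K) (a : K) :
  Stab delta a -> Stab delta (delta a).
Proof.
move=> [s [s0 ds]]; exists (fun i => if i is j.+1 then s j else delta a).
by split=> // -[|i] /=; rewrite ?s0 ?ds.
Qed.

Theorem theorem2p11 (K : fieldType) (delta : K -> K) (x : K) :
  is_derivation delta ->
  [pchar K] =i pred0 ->
  delta x = 1 ->
  (* Stab(delta, K) is a C_K[x]-submodule of K *)
  (Stab delta 0 /\
   (forall a b : K, Stab delta a -> Stab delta b -> Stab delta (a + b)) /\
   (forall r a : K, in_CKx delta x r -> Stab delta a -> Stab delta (r * a))) /\
  (* delta(Stab) is contained in Stab *)
  (forall a : K, Stab delta a -> Stab delta (delta a)).
Proof.
move=> [deltaD deltaM] _ dx.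
split; last exact: Stab_delta.
split; first exact: Stab0.
split; first exact: StabD.
by move=> r a; apply: Stab_mul_CKx.
Qed.
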